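(* Let $G$ be a finite simple graph, let $I$ be a maximum critical independent set in $G$, and let $X=I\cup N(I)$. Then $$|\operatorname{nucleus}(G)|+|\operatorname{diadem}(G)|\le |\operatorname{nucleus}(G[X])|+|\operatorname{diadem}(G[X])|.$$
   Context: For a graph $H$ and $Y\subseteq V(H)$, $N_H(Y)$ is the set of vertices of $H$ adjacent to some vertex of $Y$, and $d_H(Y)=|Y|-|N_H(Y)|$. An independent set $S$ of $H$ is critical in $H$ if $d_H(S)=\max\{d_H(Y):Y\subseteq V(H)\}$; the empty set may be critical. A maximum critical independent set is a critical independent set of maximum cardinality. $\operatorname{nucleus}(H)$ and $\operatorname{diadem}(H)$ are, respectively, the intersection and the union of all maximum critical independent sets of $H$; both are empty if the only critical independent set is $\emptyset$. $N(I)=N_G(I)$, and $G[X]$ is the subgraph of $G$ induced by $X$. *)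

From mathcomp Require Import all_boot all_order all_algebra.
Set Implicit Arguments. Unset Strict Implicit. Unset Printing Implicit Defensive.
Import GRing.Theory Num.Theory.
Local Open Scope ring_scope.

(* A finite simple graph on vertex type T is a symmetric irreflexive relation e.
   All notions below are taken in the induced subgraph H = G[V] for V : {set T};
   the whole graph G is V = [set: T]. *)
Definition simple_graph (T : finType) (e : rel T) : Prop :=
  irreflexive e /\ symmetric e.

Section Crit.
Variables (T : finType) (e : rel T) (V : {set T}).

Definition nbh (Y : {set T}) : {set T} :=
  [set v in V | [exists y in Y, (y \in V) && e y v]].

Definition dif (Y : {set T}) : int := (#|Y|%:Z - #|nbh Y|%:Z).

Definition indep (S : {set T}) : bool :=
  (S \subset V) && [forall x in S, forall y in S, ~~ e x y].

Definition critical_indep (S : {set T}) : bool :=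
  indep S && [forall Y : {set T}, (Y \subset V) ==> (dif Y <= dif S)].

Definition max_critical_indep (S : {set T}) : bool :=
  critical_indep S &&
  [forall S' : {set T}, critical_indep S' ==> (#|S'| <= #|S|)%N].

Definition nucleus : {set T} :=
  if [exists S, max_critical_indep S]
  then \bigcap_(S | max_critical_indep S) S else set0.

Definition diadem : {set T} := \bigcup_(S | max_critical_indep S) S.

End Crit.

From mathcomp Require Import all_boot all_order all_algebra.
From mathcomp Require Import zify.
Set Implicit Arguments. Unset Strict Implicit. Unset Printing Implicit Defensive.
Import Order.TTheory GRing.Theory Num.Theory.

(* d is supermodular, so sets maximising d are closed under union, and a critical
   S obeys the Hall-type inequality |B ∩ N(S)| <= |S ∩ N(B)|.  Consequently every
   maximum critical independent set lies in I ∪ N(I); with U := diadem \ I ⊆ N(I)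
   this gives |U| <= |I ∩ N(U)| and nucleus ⊆ I \ N(U), hence
   |nucleus| + |diadem| <= 2|I| in every graph.  In H = G[I ∪ N(I)] the set I
   stays maximum critical and the reverse inequalities hold: every maximum
   critical S satisfies I ⊆ S ∪ N(S \ I), so nucleus ⊇ I \ N(U), while
   criticality of the diadem forces |I ∩ N(U)| <= |U|. *)

Section CriticalSets.
Variables (T : finType) (e : rel T).
Implicit Types V X Y Z B S I : {set T}.

Lemma nbhP V Y v :
  reflect (v \in V /\ exists2 y, y \in Y & (y \in V) && e y v) (v \in nbh e V Y).
Proof. by rewrite inE; apply: (iffP andP) => -[vV H]; split => //; apply/exists_inP. Qed.

Lemma mem_nbh V Y y v : y \in Y -> y \in V -> v \in V -> e y v -> v \in nbh e V Y.
Proof. by move=> yY yV vV eyv; apply/nbhP; split => //; exists y; rewrite ?yV. Qed.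

Lemma nbh_sub V Y : nbh e V Y \subset V.
Proof. by apply/subsetP => v /nbhP []. Qed.

Lemma nbhS V Y Z : Y \subset Z -> nbh e V Y \subset nbh e V Z.
Proof.
move=> /subsetP YZ; apply/subsetP => v /nbhP [vV [y yY /andP [yV eyv]]].
exact: mem_nbh (YZ y yY) yV vV eyv.
Qed.

Lemma nbhU V Y Z : nbh e V (Y :|: Z) = nbh e V Y :|: nbh e V Z.
Proof.
apply/eqP; rewrite eqEsubset [_ :|: _ \subset _]subUset.
rewrite (nbhS V (subsetUl Y Z)) (nbhS V (subsetUr Y Z)) !andbT.
apply/subsetP => v /nbhP [vV [y /setUP [yY|yZ] /andP [yV eyv]]]; rewrite in_setU.
  by rewrite (mem_nbh yY yV vV eyv).
by rewrite (mem_nbh yZ yV vV eyv) orbT.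
Qed.

Lemma nbh_induced X V Y :
  X \subset V -> Y \subset X -> nbh e X Y = nbh e V Y :&: X.
Proof.
move=> /subsetP XV /subsetP YX; apply/setP => v; rewrite in_setI.
apply/nbhP/andP => [[vX [y yY /andP [_ eyv]]]|[/nbhP [_ [y yY /andP [_ eyv]]] vX]].
  by rewrite (mem_nbh yY (XV y (YX y yY)) (XV v vX) eyv).
by split => //; exists y; rewrite ?YX.
Qed.

Lemma dif_supermod V Y Z :
  (dif e V Y + dif e V Z <= dif e V (Y :|: Z) + dif e V (Y :&: Z))%R.
Proof.
rewrite /dif nbhU.
have := cardsUI Y Z; have := cardsUI (nbh e V Y) (nbh e V Z).
have : #|nbh e V (Y :&: Z)| <= #|nbh e V Y :&: nbh e V Z|.
  by apply: subset_leq_card; rewrite subsetI !nbhS ?subsetIl ?subsetIr.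
lia.
Qed.

Lemma indepP V S :
  reflect (S \subset V /\ {in S &, forall x y, ~~ e x y}) (indep e V S).
Proof.
apply: (iffP andP) => -[SV H]; split => //.
  by move=> x y xS yS; move/forall_inP: H => /(_ x xS) /forall_inP; apply.
by apply/forall_inP => x xS; apply/forall_inP => y yS; apply: H.
Qed.

Lemma indep_setI_nbh V S : indep e V S -> S :&: nbh e V S = set0.
Proof.
case/indepP => _ Sind; apply/setP => v; rewrite in_setI in_set0.
apply/negP => /andP [vS /nbhP [_ [y yS /andP [_ eyv]]]].
by move: (Sind y v yS vS); rewrite eyv.
Qed.

Lemma critical_indepP V S :
  reflect (indep e V S /\ forall Y, Y \subset V -> (dif e V Y <= dif e V S)%R)
          (critical_indep e V S).
Proof.
apply: (iffP andP) => -[iS H]; split => //.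
  by move=> Y YV; move/forallP: H => /(_ Y) /implyP; apply.
by apply/forallP => Y; apply/implyP; apply: H.
Qed.

Lemma max_critical_indepP V S :
  reflect (critical_indep e V S /\
           forall S', critical_indep e V S' -> #|S'| <= #|S|)
          (max_critical_indep e V S).
Proof.
apply: (iffP andP) => -[cS H]; split => //.
  by move=> S' cS'; move/forallP: H => /(_ S') /implyP; apply.
by apply/forallP => S'; apply/implyP; apply: H.
Qed.

Lemma critical_dif_setU V S Y Z : critical_indep e V S ->
  Y \subset V -> Z \subset V ->
  (dif e V S <= dif e V Y)%R -> (dif e V S <= dif e V Z)%R ->
  (dif e V S <= dif e V (Y :|: Z))%R.
Proof.
move=> /critical_indepP [_ Scr] YV ZV.
have := Scr _ (subset_trans (subsetIl Y Z) YV); have := dif_supermod V Y Z.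
lia.
Qed.

Lemma dif_split_indep V I Y : indep e V I -> Y \subset V ->
  (dif e V Y <= dif e V (Y :&: I) + #|Y :\: I|%:Z
                - #|I :&: nbh e V (Y :\: I)|%:Z)%R.
Proof.
move=> iI YV.
have sub : nbh e V (Y :&: I) :|: (I :&: nbh e V (Y :\: I)) \subset nbh e V Y.
  rewrite subUset (nbhS V (subsetIl Y I)).
  exact: subset_trans (subsetIr _ _) (nbhS V (subsetDl Y I)).
have disj : nbh e V (Y :&: I) :&: (I :&: nbh e V (Y :\: I)) = set0.
  apply/eqP; rewrite -subset0 -(indep_setI_nbh iI) subsetI; apply/andP; split.
    exact: subset_trans (subsetIr _ _) (subsetIl _ _).
  exact: subset_trans (subsetIl _ _) (nbhS V (subsetIr Y I)).
have := subset_leq_card sub.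
have := cardsUI (nbh e V (Y :&: I)) (I :&: nbh e V (Y :\: I)); rewrite disj cards0.
have := cardsID I Y; rewrite /dif; lia.
Qed.

Lemma nucleusE V I : max_critical_indep e V I ->
  nucleus e V = \bigcap_(S | max_critical_indep e V S) S.
Proof. by rewrite /nucleus => hI; case: ifP => // /existsPn /(_ I); rewrite hI. Qed.

Lemma sub_diadem V S : max_critical_indep e V S -> S \subset diadem e V.
Proof. exact: bigcup_sup. Qed.

Lemma diadem_sub V : diadem e V \subset V.
Proof.
by apply/bigcupsP => S /max_critical_indepP [/critical_indepP [/indepP []]].
Qed.

Lemma card_diadem V I : max_critical_indep e V I ->
  #|diadem e V| = #|I| + #|diadem e V :\: I|.
Proof. by move=> /sub_diadem /setIidPr ID; rewrite -(cardsID I) ID. Qed.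

Lemma dif_diadem V I : max_critical_indep e V I ->
  (dif e V I <= dif e V (diadem e V))%R.
Proof.
move=> hI; have /max_critical_indepP [cI _] := hI.
have /critical_indepP [/indepP [IV _] _] := cI.
rewrite -(setUidPr (sub_diadem hI)) /diadem.
suff [] : \bigcup_(S | max_critical_indep e V S) S \subset V /\
  (dif e V I <= dif e V (I :|: \bigcup_(S | max_critical_indep e V S) S))%R by [].
elim/big_rec: _ => [|S A hS [AV hA]]; first by rewrite sub0set setU0.
have /max_critical_indepP [/critical_indepP [/indepP [SV _] Scr] _] := hS.
split; first by rewrite subUset SV.
by rewrite setUCA; apply: critical_dif_setU; rewrite ?subUset ?IV ?Scr.
Qed.

Hypothesis e_sym : symmetric e.

Lemma dif_setD_nbh V S B : S \subset V -> B \subset V ->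
  (dif e V S - #|S :&: nbh e V B|%:Z + #|B :&: nbh e V S|%:Z
   <= dif e V (S :\: nbh e V B))%R.
Proof.
move=> SV BV.
have sub : nbh e V (S :\: nbh e V B) \subset nbh e V S :\: B.
  apply/subsetP => v vN; rewrite inE (subsetP (nbhS V (subsetDl S (nbh e V B)))) // andbT.
  move: vN => /nbhP [vV [y /setDP [yS ynB] /andP [yV eyv]]].
  by apply: contraNN ynB => vB; apply: mem_nbh vB vV yV _; rewrite e_sym.
have := subset_leq_card sub; rewrite !cardsD.
have := cardsID B (nbh e V S); have := cardsID (nbh e V B) S.
have : #|S :&: nbh e V B| <= #|S| by apply/subset_leq_card/subsetIl.
have : #|nbh e V S :&: B| <= #|nbh e V S| by apply/subset_leq_card/subsetIl.
rewrite [nbh e V S :&: B]setIC /dif; lia.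
Qed.

(* Since S \ N(B) cannot beat the critical S, the previous bound forces this. *)
Lemma critical_hall V S B : critical_indep e V S -> B \subset V ->
  #|B :&: nbh e V S| <= #|S :&: nbh e V B|.
Proof.
move=> /critical_indepP [/indepP [SV _] Scr] BV.
have := dif_setD_nbh SV BV; have := Scr _ (subset_trans (subsetDl S (nbh e V B)) SV).
lia.
Qed.

Lemma card_setD_le_nbh V I Y : critical_indep e V I ->
  Y \subset I :|: nbh e V I -> #|Y :\: I| <= #|I :&: nbh e V (Y :\: I)|.
Proof.
move=> cI YX; have YIN : Y :\: I \subset nbh e V I.
  apply/subsetP => y /setDP [yY yI].
  by move: (subsetP YX y yY); rewrite in_setU (negbTE yI).
by have := critical_hall cI (subset_trans YIN (nbh_sub _ _)); rewrite (setIidPl YIN).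
Qed.

Lemma max_critical_indep_sub_nbh V I S :
  max_critical_indep e V I -> max_critical_indep e V S ->
  S \subset I :|: nbh e V I.
Proof.
move=> hI hS; have /max_critical_indepP [cI maxI] := hI.
have /max_critical_indepP [/critical_indepP [/indepP [SV Sind] Scr] _] := hS.
have /critical_indepP [/indepP [IV Iind] Icr] := cI.
set S' := S :\: nbh e V I.
have S'V : S' \subset V := subset_trans (subsetDl _ _) SV.
have dS' : (dif e V I <= dif e V S')%R.
  rewrite /S'; have := dif_setD_nbh SV IV; have := critical_hall cI SV.
  by have := Scr _ IV; lia.
have cJ : critical_indep e V (I :|: S').
  apply/critical_indepP; split; last first.
    move=> Y YV; apply: le_trans (Icr _ YV) _.
    exact: critical_dif_setU cI IV S'V (lexx _) dS'.
  apply/indepP; split => [|x y]; first by rewrite subUset IV.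
  move=> /setUP [xI|/setDP [xS xN]] /setUP [yI|/setDP [yS yN]].
  - exact: Iind.
  - by apply: contraNN yN; apply: mem_nbh xI (subsetP IV x xI) (subsetP SV y yS).
  - apply: contraNN xN; rewrite e_sym.
    exact: mem_nbh yI (subsetP IV y yI) (subsetP SV x xS).
  - exact: Sind.
have /eqP JI : I == I :|: S' by rewrite eqEcard subsetUl maxI.
apply/subsetP => x xS; rewrite in_setU; case: (boolP (x \in nbh e V I)) => xN.
  by rewrite orbT.
by rewrite JI in_setU inE xN xS orbT.
Qed.

Lemma nucleus_diadem_le V I : max_critical_indep e V I ->
  #|nucleus e V| + #|diadem e V| <= 2 * #|I|.
Proof.
move=> hI; have /max_critical_indepP [cI _] := hI.
set U := diadem e V :\: I.
have UN : U \subset nbh e V I.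
  apply/subsetP => y /setDP [/bigcupP [S hS yS] yI].
  by move: (subsetP (max_critical_indep_sub_nbh hI hS) y yS); rewrite in_setU (negbTE yI).
have nuc : nucleus e V \subset I :\: nbh e V U.
  apply/subsetP => x; rewrite (nucleusE hI) => /bigcapP xS.
  rewrite in_setD (xS I hI) andbT.
  apply/negP => /nbhP [_ [y /setDP [yD _] /andP [_ eyx]]].
  have [S hS yS] := bigcupP yD.
  have /max_critical_indepP [/critical_indepP [/indepP [_ Sind] _] _] := hS.
  by move: (Sind y x yS (xS S hS)); rewrite eyx.
have := critical_hall cI (subset_trans UN (nbh_sub _ _)); rewrite (setIidPl UN).
have := subset_leq_card nuc; rewrite cardsD; have := card_diadem hI; rewrite -/U.
have : #|I :&: nbh e V U| <= #|I| by apply/subset_leq_card/subsetIl.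
lia.
Qed.

Section Cover.
Variables (V I : {set T}).
Hypotheses (cI : critical_indep e V I) (cover : V \subset I :|: nbh e V I).

Lemma card_critical_cover S : critical_indep e V S ->
  #|S| = #|(S :&: I) :|: (I :&: nbh e V (S :\: I))|.
Proof.
move=> cS; have /critical_indepP [iI Icr] := cI.
have /critical_indepP [iS Scr] := cS.
have /indepP [SV _] := iS; have /indepP [IV _] := iI.
have disj : (S :&: I) :&: (I :&: nbh e V (S :\: I)) = set0.
  apply/eqP; rewrite -subset0 -(indep_setI_nbh iS) subsetI; apply/andP; split.
    exact: subset_trans (subsetIl _ _) (subsetIl _ _).
  apply: subset_trans (subsetIr _ _) (subset_trans (subsetIr _ _) _).
  exact: (nbhS V (subsetDl S I)).
have := cardsUI (S :&: I) (I :&: nbh e V (S :\: I)); rewrite disj cards0.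
have := dif_split_indep iI SV; have := Icr _ (subset_trans (subsetIl S I) SV).
have := Scr _ IV; have := card_setD_le_nbh cI (subset_trans SV cover).
have := cardsID I S; lia.
Qed.

Lemma max_critical_indep_cover : max_critical_indep e V I.
Proof.
apply/max_critical_indepP; split => // S cS; rewrite (card_critical_cover cS).
by apply: subset_leq_card; rewrite subUset subsetIr subsetIl.
Qed.

Lemma max_critical_cover_sub S : max_critical_indep e V S ->
  I \subset S :|: nbh e V (S :\: I).
Proof.
move=> /max_critical_indepP [cS maxS].
have WI : (S :&: I) :|: (I :&: nbh e V (S :\: I)) \subset I.
  by rewrite subUset subsetIr subsetIl.
have /eqP {1}<- : (S :&: I) :|: (I :&: nbh e V (S :\: I)) == I.
  by rewrite eqEcard WI -(card_critical_cover cS) maxS.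
by apply: setUSS; [apply: subsetIl | apply: subsetIr].
Qed.

Lemma nucleus_diadem_ge : 2 * #|I| <= #|nucleus e V| + #|diadem e V|.
Proof.
have hI := max_critical_indep_cover.
have /critical_indepP [iI Icr] := cI.
set U := diadem e V :\: I.
have nuc : I :\: nbh e V U \subset nucleus e V.
  apply/subsetP => x /setDP [xI xNU]; rewrite (nucleusE hI); apply/bigcapP => S hS.
  move: (subsetP (max_critical_cover_sub hS) x xI); rewrite in_setU => /orP [] // xN.
  by case/negP: xNU; apply: (subsetP (nbhS _ _)) xN; apply/setSD/sub_diadem.
have DV := diadem_sub V.
have := dif_split_indep iI DV; have := dif_diadem hI.
have := Icr _ (subset_trans (subsetIl _ I) DV).
have := subset_leq_card nuc; rewrite cardsD; have := card_diadem hI; rewrite -/U.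
have : #|I :&: nbh e V U| <= #|I| by apply/subset_leq_card/subsetIl.
lia.
Qed.

End Cover.

Lemma nbh_closed_nbh V I : I \subset V -> nbh e (I :|: nbh e V I) I = nbh e V I.
Proof.
move=> IV; rewrite (@nbh_induced _ V) ?subsetUl ?subUset ?IV ?nbh_sub //.
exact/setIidPl/subsetUr.
Qed.

Lemma critical_indep_closed_nbh V I : critical_indep e V I ->
  critical_indep e (I :|: nbh e V I) I.
Proof.
move=> cI; have /critical_indepP [iI Icr] := cI; have /indepP [IV Iind] := iI.
set X := I :|: nbh e V I.
have XV : X \subset V by rewrite subUset IV nbh_sub.
have IX : I \subset X := subsetUl _ _.
have iIX : indep e X I by apply/indepP; split.
apply/critical_indepP; split => // Y YX.
have dXI : dif e X I = dif e V I by rewrite /dif nbh_closed_nbh.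
have dXYI : dif e X (Y :&: I) = dif e V (Y :&: I).
  have NX : nbh e V (Y :&: I) \subset X.
    exact: subset_trans (nbhS V (subsetIr Y I)) (subsetUr _ _).
  by rewrite /dif (nbh_induced XV) ?(subset_trans (subsetIl _ _) YX) // (setIidPl NX).
have NXB : I :&: nbh e X (Y :\: I) = I :&: nbh e V (Y :\: I).
  rewrite (nbh_induced XV) ?(subset_trans (subsetDl _ _) YX) // setIA.
  exact/setIidPl/(subset_trans (subsetIl _ _) IX).
have := dif_split_indep iIX YX; rewrite dXI dXYI NXB.
have := card_setD_le_nbh cI YX.
have := Icr _ (subset_trans (subsetIl Y I) (subset_trans YX XV)).
lia.
Qed.

End CriticalSets.

Theorem lemma2p4 (T : finType) (e : rel T) (I : {set T}) :
  simple_graph e ->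
  max_critical_indep e [set: T] I ->
  let X := I :|: nbh e [set: T] I in
  (#|nucleus e [set: T]| + #|diadem e [set: T]| <=
   #|nucleus e X| + #|diadem e X|)%N.
Proof.
move=> [_ e_sym] hI; cbv zeta; set X := I :|: _.
have /max_critical_indepP [cI _] := hI.
have cIX : critical_indep e X I := critical_indep_closed_nbh e_sym cI.
have coverX : X \subset I :|: nbh e X I by rewrite nbh_closed_nbh ?subsetT.
have := nucleus_diadem_le e_sym hI; have := nucleus_diadem_ge e_sym cIX coverX.
lia.
Qed.
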